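(* Let $F\in\mathbb{R}[x,y,t,s]$ be square-free, with no factor depending only on $(t,s)$, and such that the leading coefficient of $F$ with respect to $y$ does not depend on $x$. Let $M(x,t,s)=\sqrt{D_y(F)}$ and $R(t,s)=D_x(M)$, and assume $R$ is not identically zero. Let $t_0\in\mathbb{R}$ be such that $t-t_0$ is not a factor of $R(t,s)$. Then: (i) $\mathrm{Res}_x(M,M_x)$ specializes well at $t=t_0$, i.e. $\mathrm{Res}_x(M,M_x)(t_0,s)=\mathrm{Res}_x\big(M(x,t_0,s),M_x(x,t_0,s)\big)$, where $M_x=\partial M/\partial x$; (ii) $M(x,t_0,s)$ is square-free as a polynomial in the variable $x$. The analogous statements hold for $s_0\in\mathbb{R}$ such that $s-s_0$ is not a factor of $R(t,s)$, with the specialization $s=s_0$.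
   Context: For a polynomial $G$ and a variable $w$, $D_w(G):=\mathrm{Res}_w(G,\partial G/\partial w)$, and $\sqrt{G}$ denotes the square-free part of $G$. By convention $M:=0$ if $\deg_y F=0$ and $R:=0$ if $\deg_x M=0$. *)

From HB Require Import structures.
From mathcomp Require Import all_boot all_order all_algebra.
From mathcomp Require Import reals.
Set Implicit Arguments. Unset Strict Implicit. Unset Printing Implicit Defensive.
Import Order.TTheory GRing.Theory Num.Theory.
Local Open Scope ring_scope.

(* Polynomial representation (nested univariate polynomials):
   R[s]                 = {poly R}
   R[t,s]               = {poly {poly R}}                 (outer var t)
   R[x,t,s]             = {poly {poly {poly R}}}          (outer var x)
   R[y,x,t,s]           = {poly {poly {poly {poly R}}}}   (outer var y) *)

Definition mdvd (A : comRingType) (a b : A) : Prop := exists c, b = a * c.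

(* square-free: every square factor is a unit (units of nested polynomial
   rings over a field = nonzero constants) *)
Definition sqfree (A : comUnitRingType) (g : A) : Prop :=
  forall q r : A, g = q * q * r -> q \is a GRing.unit.

(* M is a square-free part of G: M square-free, M | G, and G | M^k
   (i.e. M is the product of the distinct irreducible factors of G,
   up to a nonzero constant) *)
Definition sqpart (A : comUnitRingType) (G M : A) : Prop :=
  sqfree M /\ mdvd M G /\ exists k : nat, mdvd G (M ^+ k).

(* D_w(G) = Res_w(G, dG/dw) for the outermost variable w *)
Definition Dres (A : comNzRingType) (G : {poly A}) : A := resultant G G^`().

Definition sqfree_x (R : fieldType) (p : {poly {poly R}}) : Prop :=
  forall q r : {poly {poly R}}, p = q * q * r -> (size q <= 1)%N.

Definition spec_t (R : fieldType) (t0 : R) (P : {poly {poly R}}) : {poly R} :=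
  P.[t0%:P].
Definition spec_t3 (R : fieldType) (t0 : R) (M : {poly {poly {poly R}}})
  : {poly {poly R}} := map_poly (fun c : {poly {poly R}} => c.[t0%:P]) M.
Definition spec_s (R : fieldType) (s0 : R) (P : {poly {poly R}}) : {poly R} :=
  map_poly (fun c : {poly R} => c.[s0]) P.
Definition spec_s3 (R : fieldType) (s0 : R) (M : {poly {poly {poly R}}})
  : {poly {poly R}} := map_poly (fun c : {poly {poly R}} => spec_s s0 c) M.

From HB Require Import structures.
From mathcomp Require Import all_boot all_order all_algebra.
From mathcomp Require Import reals.
From mathcomp Require Import zify ring.
Set Implicit Arguments. Unset Strict Implicit. Unset Printing Implicit Defensive.
Import Order.TTheory GRing.Theory Num.Theory.
Local Open Scope ring_scope.

(* Only the nonvanishing of R(t0, s) is needed.  If the specialization [f] kills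
   the leading coefficient of M, it also kills that of M_x, and then the last
   column of the specialized Sylvester matrix is zero, so f(R) = 0.  Hence f
   preserves both leading coefficients, so it commutes with the resultant, and
   the specialized discriminant is nonzero, which forbids repeated factors. *)

Section DerivLeadCoef.
Variable A : nzRingType.
Implicit Type p : {poly A}.

Lemma coef_deriv_lead p : p^`()`_(size p).-2 = lead_coef p *+ (size p).-1.
Proof.
rewrite coef_deriv lead_coefE; have [p_nc | p_small] := ltnP 1 (size p).
  by rewrite prednK // -subn1 subn_gt0.
rewrite nth_default /=; last by case: (size p) p_small => [|[|]].
by case: (size p) p_small => [|[|]]; rewrite ?mul0rn ?mulr0n.
Qed.

Lemma size_deriv_lead p :
  lead_coef p *+ (size p).-1 != 0 -> size p^`() = (size p).-1.
Proof.
move=> nz; have p_nc : (1 < size p)%N.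
  by case: (size p) nz => [|[|n]] //; rewrite mulr0n eqxx.
have p_neq0 : p != 0 by rewrite -size_poly_gt0 ltnW.
apply/eqP; rewrite eqn_leq -ltnS (ltn_predK p_nc) lt_size_deriv //= leqNgt.
apply: contra nz => small; rewrite -coef_deriv_lead nth_default //.
by rewrite -ltnS prednK // -subn1 subn_gt0.
Qed.

Lemma lead_coef_deriv p :
  lead_coef p *+ (size p).-1 != 0 -> lead_coef p^`() = lead_coef p *+ (size p).-1.
Proof. by move=> nz; rewrite lead_coefE size_deriv_lead // coef_deriv_lead. Qed.

End DerivLeadCoef.

Lemma rmorph_resultant_eq0 (A B : comNzRingType) (f : {rmorphism A -> B})
    (p q : {poly A}) :
  (1 < size p)%N -> f (lead_coef p) = 0 -> f (lead_coef q) = 0 ->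
  f (resultant p q) = 0.
Proof.
move=> p_nc flp0 flq0.
have f_coef_high r m : f (lead_coef r) = 0 -> ((size r).-1 <= m)%N -> f r`_m = 0.
  move=> flr0; rewrite leq_eqVlt => /orP[/eqP <- // | lt_m].
  by rewrite nth_default ?rmorph0 // (leq_trans (leqSpred _)).
set dS := ((size q).-1 + (size p).-1)%N.
have last_lt : (dS.-1 < dS)%N.
  by rewrite ltn_predL (leq_trans _ (leq_addl _ _)) // -subn1 subn_gt0.
rewrite /resultant -det_map_mx (expand_det_col _ (Ordinal last_lt)) big1 // => i _.
rewrite mxE Sylvester_mxE /=; case: split => k; rewrite rmorphMn f_coef_high ?mul0rn ?mul0r //.
all: move: (ltn_ord k); rewrite /dS; move: (nat_of_ord k) => {i k last_lt} j.
all: by move: j (size p).-1 (size q).-1 => j a b; lia.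
Qed.

Section DiscriminantSpecialization.
Variables (aR : idomainType) (B : idomainType) (f : {rmorphism {poly aR} -> B}).
Hypothesis B_char0 : [pchar B] =i pred0.
Variable p : {poly {poly aR}}.
Hypotheses (p_nc : (1 < size p)%N) (f_discr_neq0 : f (resultant p p^`()) != 0).

Let n := (size p).-1.

Let n_neq0 : n%:R != 0 :> B.
Proof. by rewrite (pcharf0P _).1 // /n; case: (size p) p_nc => [|[|]]. Qed.

Let lead_coef_deriv_p : lead_coef p^`() = lead_coef p *+ n.
Proof.
apply: lead_coef_deriv; rewrite -mulr_natr mulf_eq0 negb_or lead_coef_eq0.
rewrite -size_poly_gt0 ltnW //=.
by apply: contraNneq n_neq0 => n0; rewrite -(rmorph_nat f) n0 rmorph0.
Qed.

Lemma lead_coef_discr_neq0 : f (lead_coef p) != 0.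
Proof.
apply: contraNneq f_discr_neq0 => flp0.
by rewrite rmorph_resultant_eq0 // lead_coef_deriv_p rmorphMn flp0 mul0rn.
Qed.

Lemma lead_coef_deriv_discr_neq0 : f (lead_coef p^`()) != 0.
Proof.
by rewrite lead_coef_deriv_p rmorphMn -mulr_natr mulf_eq0 negb_or lead_coef_discr_neq0.
Qed.

Lemma map_discr : f (resultant p p^`()) = resultant (map_poly f p) (map_poly f p)^`().
Proof.
by rewrite map_resultant ?deriv_map ?lead_coef_discr_neq0 ?lead_coef_deriv_discr_neq0.
Qed.

End DiscriminantSpecialization.

Lemma sqfree_x_discr (R : fieldType) (p : {poly {poly R}}) :
  p != 0 -> resultant p p^`() != 0 -> sqfree_x p.
Proof.
move=> p_neq0 discr_neq0 q r def_p; rewrite leqNgt; apply: contra discr_neq0 => q_nc.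
have q_dvd_p : q %| p by rewrite def_p -mulrA dvdp_mulIl.
have q_dvd_p' : q %| p^`().
  have -> : p^`() = q * (q^`() * r *+ 2 + q * r^`()) by rewrite def_p !derivM; ring.
  exact: dvdp_mulIl.
rewrite resultant_eq0 (leq_trans q_nc) // dvdp_leq ?gcdp_eq0 ?negb_and ?p_neq0 //.
by rewrite dvdp_gcd q_dvd_p q_dvd_p'.
Qed.

Lemma discr_specialization (R : fieldType) (aR : idomainType)
    (f : {rmorphism {poly aR} -> {poly R}}) (M : {poly {poly aR}}) :
  [pchar R] =i pred0 -> (1 < size M)%N -> f (resultant M M^`()) != 0 ->
  f (resultant M M^`()) = resultant (map_poly f M) (map_poly f M)^`()
  /\ sqfree_x (map_poly f M).
Proof.
move=> R_char0 M_nc discr_neq0.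
have char0 : [pchar {poly R}] =i pred0 by move=> k; rewrite pchar_poly R_char0.
have discr_eq := map_discr char0 M_nc discr_neq0.
split=> //; apply: sqfree_x_discr; last by rewrite -discr_eq.
by rewrite -size_poly_gt0 size_map_poly_id0 ?(ltnW M_nc) ?lead_coef_discr_neq0.
Qed.

Section Specializations.
Variable R : fieldType.

Lemma spec_t_eq0 (t0 : R) (P : {poly {poly R}}) :
  spec_t t0 P = 0 -> mdvd ('X - (t0%:P)%:P) P.
Proof. by move=> /eqP/factor_theorem[q ->]; exists q; rewrite mulrC. Qed.

Lemma spec_s_eq0 (s0 : R) (P : {poly {poly R}}) :
  spec_s s0 P = 0 -> mdvd (('X - s0%:P)%:P) P.
Proof.
rewrite /spec_s => /polyP P_s0; exists (map_poly (fun c => c %/ ('X - s0%:P)) P).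
apply/polyP => i; rewrite coefCM coef_map_id0 ?div0p // mulrC divpK //.
rewrite -root_factor_theorem /root.
by move: (P_s0 i); rewrite coef_map_id0 ?horner0 // coef0 => ->.
Qed.

End Specializations.

Theorem lemma11 (R : realType)
  (F : {poly {poly {poly {poly R}}}})   (* F(y, x, t, s), outer variable y *)
  (M : {poly {poly {poly R}}})          (* M(x, t, s), outer variable x *)
  (RR : {poly {poly R}})                (* R(t, s), outer variable t *)
  (HFsq : sqfree F)
  (HFts : forall c : {poly {poly R}}, mdvd (c%:P%:P) F -> c \is a GRing.unit)
  (HFlc : (size (lead_coef F) <= 1)%N)
  (HM : if (size F <= 1)%N then M = 0 else sqpart (Dres F) M)
  (HR : RR = if (size M <= 1)%N then 0 else Dres M)
  (HR0 : RR != 0) :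
  (forall t0 : R, ~ mdvd ('X - (t0%:P)%:P) RR ->
     spec_t t0 (resultant M M^`()) = resultant (spec_t3 t0 M) (spec_t3 t0 M)^`()
     /\ sqfree_x (spec_t3 t0 M))
  /\
  (forall s0 : R, ~ mdvd (('X - s0%:P)%:P) RR ->
     spec_s s0 (resultant M M^`()) = resultant (spec_s3 s0 M) (spec_s3 s0 M)^`()
     /\ sqfree_x (spec_s3 s0 M)).
Proof.
have M_nc : (1 < size M)%N.
  by move: HR HR0; case: ifP => [_ ->|/negbT]; rewrite ?eqxx // -ltnNge.
have RR_discr : RR = resultant M M^`() by rewrite HR ifF // leqNgt M_nc.
have R_char0 := @pchar_num R.
split=> [t0 t0_ndvd | s0 s0_ndvd].
  apply: (@discr_specialization _ _ (horner_eval t0%:P)) => //.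
  by apply/eqP => discr_t0; apply: t0_ndvd; rewrite RR_discr; apply: spec_t_eq0.
apply: (@discr_specialization _ _ (map_poly (horner_eval s0))) => //.
by apply/eqP => discr_s0; apply: s0_ndvd; rewrite RR_discr; apply: spec_s_eq0.
Qed.
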